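(* Let $G=(V,E,c_V^G,c_E^G)$ and $H=(V,E,c_V^H,c_E^H)$ be two capacitated graphs on the same graph $(V,E)$ that differ only in the capacity of one edge $(s,t)\in E$ (all vertex capacities and all other edge capacities coincide). Assume that in the executions of Rising-Tide on $G$ and on $H$ no two vertices become saturated simultaneously, and that the dependency graphs coincide, $D_G=D_H$. Let $\mu_G,\mu_H$ be the outputs of Rising-Tide on $G$ and $H$. Then \[\sum_i\left|\Big(c_V^G(i)-\sum_j\mu_G(i,j)\Big)-\Big(c_V^H(i)-\sum_j\mu_H(i,j)\Big)\right|\le 2|c_E^G(s,t)-c_E^H(s,t)|.\]
   Context: Capacitated graphs have nonnegative vertex capacities $c_V$ and edge capacities $c_E$; edges may include self-loops, and in $\sum_j\mu(i,j)$ a self-loop at $i$ counts once. A feasible fractional matching $\mu:E\to\mathbb{R}_{\ge0}$ satisfies $\mu(e)\le c_E(e)$ and $\sum_j\mu(i,j)\le c_V(i)$. Vertex $i$ is saturated if $\sum_j\mu(i,j)=c_V(i)$; edge $e$ is saturated if $\mu(e)=c_E(e)$. Rising-Tide: set $E'=\{e\in E:c_E(e)>0\}$ and $\mu\equiv0$; while $E'\ne\emptyset$: choose the maximum $\delta\ge0$ such that $\mu+\delta\mathbf{1}_{E'}$ is feasible, set $\mu\gets\mu+\delta\mathbf{1}_{E'}$, and remove from $E'$ every edge $(i,j)$ such that $i$, $j$, or $(i,j)$ is saturated; return $\mu$. Dependency graph $D_G$: the directed graph on $V$ which, for each edge $(i,j)\in E$, contains $j\to i$ if $i$ is saturated at the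 moment $(i,j)$ is removed from $E'$ in the execution on $G$, and contains $i\to j$ if $j$ is saturated at that moment. *)

From mathcomp Require Import all_boot all_order all_algebra.
Set Implicit Arguments. Unset Strict Implicit. Unset Printing Implicit Defensive.
Import Order.TTheory GRing.Theory Num.Theory.
Local Open Scope ring_scope.

(* A capacitated graph on vertex set V with edge set E: each edge e has
   endpoints [ends e] (possibly a self-loop), vertex capacities cV and edge
   capacities cE, valued in an ordered field R. *)
Section RisingTide.
Variables (R : realFieldType) (V E : finType) (ends : E -> V * V).
Variables (cV : V -> R) (cE : E -> R).

Definition incident (e : E) (i : V) : bool := ((ends e).1 == i) || ((ends e).2 == i).

(* sum_j mu(i,j); a self-loop at i counts once *)
Definition load (mu : {ffun E -> R}) (i : V) : R := \sum_(e | incident e i) mu e.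

Definition vsat (mu : {ffun E -> R}) (i : V) : bool := load mu i == cV i.
Definition esat (mu : {ffun E -> R}) (e : E) : bool := mu e == cE e.

Definition degE (Ep : {set E}) (i : V) : nat := #|[set e in Ep | incident e i]|.

(* The maximum delta >= 0 such that mu + delta 1_{Ep} is feasible, written
   out explicitly (for feasible mu, nonnegative capacities, nonempty Ep):
   the minimum of the edge slacks on Ep and the vertex slacks divided by the
   number of incident edges of Ep. *)
Definition delta (mu : {ffun E -> R}) (Ep : {set E}) : R :=
  let vals := [seq cE e - mu e | e in Ep] ++
              [seq (cV i - load mu i) / (degE Ep i)%:R
                 | i in [set i | (0 < degE Ep i)%N]] in
  foldr Order.min (head 0 vals) vals.

Definition rt_state := ({ffun E -> R} * {set E})%type.

Definition rt_step (s : rt_state) : rt_state :=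
  let: (mu, Ep) := s in
  if Ep == set0 then s else
  let d := delta mu Ep in
  let mu' := [ffun e => if e \in Ep then mu e + d else mu e] in
  (mu', [set e in Ep | ~~ [|| vsat mu' (ends e).1, vsat mu' (ends e).2
                            | esat mu' e]]).

Definition rt_init : rt_state := ([ffun => 0], [set e | 0 < cE e]).

Definition rt_state_at (k : nat) : rt_state := iter k rt_step rt_init.

(* each nonempty iteration removes at least one edge, so after #|E|
   iterations Ep is empty: this is the output of Rising-Tide *)
Definition rising_tide : {ffun E -> R} := (rt_state_at #|E|).1.

Definition becomes_sat (i : V) (k : nat) : Prop :=
  vsat (rt_state_at k).1 i /\
  (match k with 0 => True | k'.+1 => ~~ vsat (rt_state_at k').1 i end).

Definition removed_at (e : E) (k : nat) : Prop :=
  e \in (rt_state_at k).2 /\ e \notin (rt_state_at k.+1).2.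

Definition dep_arc (u v : V) : Prop :=
  exists (e : E) (k : nat), removed_at e k /\
    ( ((ends e).2 = u /\ (ends e).1 = v /\ vsat (rt_state_at k.+1).1 (ends e).1)
   \/ ((ends e).1 = u /\ (ends e).2 = v /\ vsat (rt_state_at k.+1).1 (ends e).2)).

End RisingTide.

(* Call an edge pinned to an endpoint v if it left the active set exactly when v
   became saturated.  Since D_G = D_H, an edge is pinned to the same vertex in both
   executions.  A pinned vertex is saturated in both final flows, and all edges
   pinned to it were removed in the same round, hence carry equal flow; unpinned
   edges end at full capacity, so their flows differ only on (s,t).  At a pinned
   vertex the flow changes on pinned edges therefore cancel the changes on the
   other incident edges, which bounds them; summing over vertices, every change on a
   pinned edge is paid for at its other endpoint, and only the change on (s,t),
   counted at its two endpoints, remains. *)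

From Pilot Require Import Defs.
From mathcomp Require Import all_boot all_order all_algebra zify.
Set Implicit Arguments. Unset Strict Implicit. Unset Printing Implicit Defensive.
Import Order.TTheory GRing.Theory Num.Theory.
Local Open Scope ring_scope.

Lemma foldr_min_head_mem d (T : porderType d) (x : T) s :
  s != [::] -> foldr Order.min (head x s) s \in s.
Proof.
have min_either (a b : T) : Order.min a b = a \/ Order.min a b = b.
  by rewrite /Order.min; case: ifP; [left|right].
case: s => // a s _ /=.
suff y_in : foldr Order.min a s \in a :: s.
  by case: (min_either a (foldr Order.min a s)) => ->; rewrite ?mem_head.
elim: s => [|y s IH] /=; first by rewrite mem_seq1.
case: (min_either y (foldr Order.min a s)) => ->; first by rewrite !inE eqxx orbT.
by move: IH; rewrite !inE => /orP[] ->; rewrite ?orbT.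
Qed.

Lemma incidentE (V E : finType) (ends : E -> V * V) e i :
  incident ends e i = (i \in [set (ends e).1; (ends e).2]).
Proof. by rewrite /incident !inE !(eq_sym i). Qed.

Lemma card_incident_le2 (V E : finType) (ends : E -> V * V) e :
  (#|[pred i | incident ends e i]| <= 2)%N.
Proof.
by rewrite (eq_card (incidentE ends e)) cards2; case: (_ != _).
Qed.

Lemma card_incident_unpinned (V E : finType) (ends : E -> V * V)
    (tau : E -> option V) e :
  (forall v, tau e = Some v -> incident ends e v) ->
  (#|[pred i | incident ends e i && (tau e != Some i)]|
     <= #|[pred i | tau e == Some i]| + (tau e == None).*2)%N.
Proof.
case: (tau e) => [v /(_ v erefl)|_]; last first.
  apply: leq_trans (leq_addl _ _); apply: leq_trans (card_incident_le2 ends e).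
  by apply/subset_leq_card/subsetP => i /andP[].
rewrite addn0 => ev.
have -> : #|[pred i | Some v == Some i]| = 1%N.
  by rewrite -(card1 v); apply: eq_card => i; rewrite !inE (inj_eq Some_inj) eq_sym.
apply: (@leq_trans #|[set (ends e).1; (ends e).2] :\ v|).
  apply/subset_leq_card/subsetP => i.
  by rewrite !inE incidentE !inE (inj_eq Some_inj) (eq_sym v) andbC.
have := cardsD1 v [set (ends e).1; (ends e).2]; rewrite -incidentE ev add1n cards2.
by case: (_ != _) => -[<-].
Qed.

Section PinnedBalance.
Variables (R : numDomainType) (V E : finType) (ends : E -> V * V).
Variables (tau : E -> option V) (d : E -> R).
Hypothesis tau_incident : forall e v, tau e = Some v -> incident ends e v.
Hypothesis pinned_const : forall e f v, tau e = Some v -> tau f = Some v -> d e = d f.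
Hypothesis pinned_balanced :
  forall e v, tau e = Some v -> \sum_(f | incident ends f v) d f = 0.

Local Notation excess i := (\sum_(e | incident ends e i) d e).

Lemma norm_excess_le i :
  `|excess i| + \sum_(e | tau e == Some i) `|d e|
    <= \sum_(e | incident ends e i && (tau e != Some i)) `|d e|.
Proof.
set P := \sum_(e | tau e == Some i) d e.
set Q := \sum_(e | incident ends e i && (tau e != Some i)) d e.
have excessE : excess i = P + Q.
  rewrite (bigID (fun e => tau e == Some i)) /=; congr (_ + _).
  by apply: eq_bigl => e; case: eqP => [/tau_incident ->|]; rewrite ?andbF.
have [e0 /eqP pin_e0 | unpinned] := pickP (fun e => tau e == Some i); last first.
  by rewrite excessE /P !(big_pred0 _ _ _ _ unpinned) add0r addr0 ler_norm_sum.
have fiber_const e : tau e == Some i -> d e = d e0.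
  by move=> /eqP pin_e; exact: pinned_const pin_e pin_e0.
have -> : \sum_(e | tau e == Some i) `|d e| = `|P|.
  rewrite /P (eq_bigr _ fiber_const) (eq_bigr (fun e => `|d e0|)); last first.
    by move=> e /fiber_const ->.
  by rewrite !sumr_const normrMn.
have PQ0 : P + Q = 0 by rewrite -excessE (pinned_balanced pin_e0).
rewrite excessE PQ0 normr0 add0r.
have -> : P = - Q by apply/eqP; rewrite -addr_eq0 PQ0.
by rewrite normrN ler_norm_sum.
Qed.

Lemma sum_norm_excess_le :
  \sum_i `|excess i| <= (\sum_(e | tau e == None) `|d e|) *+ 2.
Proof.
have swap (P : V -> E -> bool) :
    \sum_i \sum_(e | P i e) `|d e| = \sum_e \sum_(i | P i e) `|d e|.
  rewrite (eq_bigr (fun i => \sum_e if P i e then `|d e| else 0)); last first.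
    by move=> i _; rewrite big_mkcond.
  by rewrite exchange_big; apply: eq_bigr => e _; rewrite [RHS]big_mkcond.
have per_vertex : \sum_i `|excess i| + \sum_e \sum_(i | tau e == Some i) `|d e|
    <= \sum_e \sum_(i | incident ends e i && (tau e != Some i)) `|d e|.
  rewrite -(swap (fun i e => tau e == Some i)).
  rewrite -(swap (fun i e => incident ends e i && (tau e != Some i))).
  by rewrite -big_split; apply: ler_sum => i _; exact: norm_excess_le.
have per_edge e :
    \sum_(i | incident ends e i && (tau e != Some i)) `|d e|
      <= \sum_(i | tau e == Some i) `|d e| + `|d e| *+ (tau e == None).*2.
  rewrite !sumr_const -mulrnDr; apply: ler_wpMn2l => //.
  by apply: card_incident_unpinned => v; exact: tau_incident.
have := le_trans per_vertex (ler_sum _ (fun e _ => per_edge e)).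
rewrite big_split /= [X in _ <= X]addrC lerD2r => /le_trans; apply.
rewrite -sumrMnl [leRHS]big_mkcond /=; apply: ler_sum => e _.
by case: (tau e == None); rewrite ?mul0rn.
Qed.
End PinnedBalance.

Lemma sum_norm_single (R : numDomainType) (I : finType) (P : pred I) (F : I -> R)
    (s : I) (x : R) :
  (forall i, P i -> F i = if i == s then x else 0) -> \sum_(i | P i) `|F i| <= `|x|.
Proof.
move=> F_single; apply: (@le_trans _ _ (\sum_i `|if i == s then x else 0|)).
  by rewrite [leLHS]big_mkcond; apply: ler_sum => i _; case: ifP => // /F_single ->.
by rewrite (bigD1 s) //= eqxx big1 ?addr0 // => i /negbTE ->; rewrite normr0.
Qed.

Section Execution.
Variables (R : realFieldType) (V E : finType) (ends : E -> V * V).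
Variables (cV : V -> R) (cE : E -> R).
Local Notation mu k := (rt_state_at ends cV cE k).1.
Local Notation Ep k := (rt_state_at ends cV cE k).2.
Local Notation vsat := (vsat ends cV).
Local Notation incident := (incident ends).
Local Notation load := (load ends).
Local Notation degE := (degE ends).
Local Notation delta k := (delta ends cV cE (mu k) (Ep k)).
Local Notation removed_at := (removed_at ends cV cE).

Lemma mu_step k e : mu k.+1 e = if e \in Ep k then mu k e + delta k else mu k e.
Proof.
rewrite /rt_state_at iterS; case: (iter k _ _) => mu0 Ep0 /=.
by case: eqP => [->|_]; rewrite /= ?in_set0 ?ffunE.
Qed.

Lemma Ep_step k : Ep k.+1 = [set e in Ep k | ~~ [|| vsat (mu k.+1) (ends e).1,
   vsat (mu k.+1) (ends e).2 | esat cE (mu k.+1) e]].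
Proof.
rewrite /rt_state_at iterS; case: (iter k _ _) => mu0 Ep0 /=.
by case: eqP => [->|_] //=; apply/setP => e; rewrite !inE.
Qed.

Lemma Ep_subS k : Ep k.+1 \subset Ep k.
Proof. by rewrite Ep_step; apply/subsetP => e; rewrite inE => /andP[]. Qed.

Lemma Ep_sub k n : (k <= n)%N -> Ep n \subset Ep k.
Proof.
apply: (@homo_leq _ (fun k => Ep k) (fun A B => B \subset A)) => // [A B C|].
  by move=> AB BC; apply: subset_trans BC AB.
exact: Ep_subS.
Qed.

Lemma mu_frozen k n e : (k <= n)%N -> e \notin Ep k -> mu n e = mu k e.
Proof.
move=> + e_out; elim: n => [|n IH]; first by rewrite leqn0 => /eqP->.
rewrite leq_eqVlt => /orP[/eqP->//|]; rewrite ltnS => le_kn.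
rewrite mu_step IH //; case: ifP => // e_in.
by move/subsetP: (Ep_sub le_kn) => /(_ e e_in); rewrite (negbTE e_out).
Qed.

Lemma mu_const_Ep k : {in Ep k &, forall e f, mu k e = mu k f}.
Proof.
elim: k => [|k IH] e f; first by rewrite /rt_state_at /= !ffunE.
move=> e_in f_in; have /subsetP sub := Ep_subS k.
by rewrite !mu_step (sub _ e_in) (sub _ f_in) (IH e f) ?sub.
Qed.

Lemma vsat_removes_incident k v e :
  vsat (mu k.+1) v -> incident e v -> e \notin Ep k.+1.
Proof.
move=> v_sat; rewrite /Defs.incident Ep_step inE negb_and negbK.
by case/orP=> /eqP ev; rewrite ev v_sat ?orbT.
Qed.

Lemma load_step k i : load (mu k.+1) i = load (mu k) i + delta k *+ degE (Ep k) i.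
Proof.
rewrite /Defs.load /Defs.degE -sumr_const.
rewrite [X in _ + X](eq_bigl (fun e => incident e i && (e \in Ep k))); last first.
  by move=> e; rewrite !inE andbC.
rewrite big_mkcondr -big_split /=; apply: eq_bigr => e _.
by rewrite mu_step; case: ifP; rewrite ?addr0.
Qed.

Lemma delta_attained k : Ep k != set0 ->
  (exists2 e, e \in Ep k & delta k = cE e - mu k e) \/
  (exists2 i, (0 < degE (Ep k) i)%N &
     delta k = (cV i - load (mu k) i) / (degE (Ep k) i)%:R).
Proof.
case/set0Pn=> e0 e0_in; rewrite /Defs.delta.
set edge_slacks := [seq _ | _ in _]; set vertex_slacks := [seq _ | _ in _].
have edges_nonempty : edge_slacks != [::].
  by rewrite -size_eq0 size_map -cardE -lt0n; apply/card_gt0P; exists e0.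
have : edge_slacks ++ vertex_slacks != [::] by case: edge_slacks edges_nonempty.
move/(foldr_min_head_mem 0); rewrite mem_cat => /orP[].
  by case/imageP=> e e_in ->; left; exists e.
by case/imageP=> i; rewrite inE => deg_i ->; right; exists i.
Qed.

Lemma step_removes k : Ep k != set0 -> exists2 e, e \in Ep k & e \notin Ep k.+1.
Proof.
case/delta_attained => [[e e_in slack_e] | [i deg_i slack_i]].
  exists e => //; rewrite Ep_step inE negb_and negbK; apply/orP; right.
  by rewrite /esat mu_step e_in slack_e subrKC eqxx !orbT.
have i_sat : vsat (mu k.+1) i.
  rewrite /Defs.vsat load_step slack_i -[_ / _ *+ _]mulr_natr divfK ?subrKC //.
  by rewrite pnatr_eq0 -lt0n.
move: deg_i; rewrite /Defs.degE => /card_gt0P [e]; rewrite inE => /andP[e_in e_inc].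
by exists e => //; exact: vsat_removes_incident i_sat e_inc.
Qed.

Lemma card_Ep_le k : (#|Ep k| <= #|E| - k)%N.
Proof.
elim: k => [|k IH]; first by rewrite subn0 max_card.
have [Ep0|/step_removes [e e_in e_out]] := eqVneq (Ep k) set0.
  by move: (Ep_subS k); rewrite Ep0 subset0 => /eqP ->; rewrite cards0.
have : (#|Ep k.+1| < #|Ep k|)%N.
  by apply/proper_card/properP; split; [exact: Ep_subS | exists e].
lia.
Qed.

Lemma Ep_final : Ep #|E| = set0.
Proof. by apply/eqP; rewrite -cards_eq0 -leqn0 -(subnn #|E|) card_Ep_le. Qed.

Lemma removed_before_end e k : removed_at e k -> (k < #|E|)%N.
Proof.
case=> e_in _; rewrite ltnNge; apply/negP => /Ep_sub/subsetP/(_ e e_in).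
by rewrite Ep_final inE.
Qed.

Lemma removed_at_exists e : e \in Ep 0 -> exists k, removed_at e k.
Proof.
move=> e_in0; have : e \notin Ep #|E| by rewrite Ep_final inE.
elim: #|E| => [|n IH]; first by rewrite e_in0.
by case: (boolP (e \in Ep n)) => [e_in e_out | e_out _]; [exists n | exact: IH].
Qed.

Lemma removed_atE e k : removed_at e k ->
  [|| vsat (mu k.+1) (ends e).1, vsat (mu k.+1) (ends e).2 | esat cE (mu k.+1) e].
Proof. by case=> e_in; rewrite Ep_step inE e_in negbK. Qed.

Lemma removed_by_saturation k k' v f :
  vsat (mu k.+1) v -> incident f v -> f \in Ep k' -> (k' <= k)%N.
Proof.
move=> v_sat f_inc f_in; rewrite leqNgt; apply/negP => /Ep_sub/subsetP/(_ f f_in).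
by rewrite (negbTE (vsat_removes_incident v_sat f_inc)).
Qed.

Definition pinned (e : E) (v : V) : bool :=
  [exists k : 'I_#|E|,
     [&& e \in Ep k, e \notin Ep k.+1, vsat (mu k.+1) v & incident e v]].

Lemma pinnedP e v :
  reflect (exists k, [/\ removed_at e k, vsat (mu k.+1) v & incident e v])
          (pinned e v).
Proof.
apply: (iffP existsP) => [[k /and4P[e_in e_out v_sat e_inc]] | ].
  by exists k.
case=> k [removed v_sat e_inc].
exists (Ordinal (removed_before_end removed)).
by case: removed => e_in e_out; rewrite /= e_in e_out v_sat e_inc.
Qed.

Lemma pinned_incident e v : pinned e v -> incident e v.
Proof. by case/pinnedP => k []. Qed.

Lemma pinned_vsat e v : pinned e v -> vsat (rising_tide ends cV cE) v.
Proof.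
case/pinnedP => k [removed v_sat _]; rewrite /Defs.vsat /Defs.load /rising_tide.
rewrite (eq_bigr (fun f => mu k.+1 f)) // => f f_inc.
exact: mu_frozen (removed_before_end removed) (vsat_removes_incident v_sat f_inc).
Qed.

Lemma pinned_const e f v : pinned e v -> pinned f v ->
  rising_tide ends cV cE e = rising_tide ends cV cE f.
Proof.
case/pinnedP => k [[e_in e_out] v_sat e_inc].
case/pinnedP => k' [[f_in f_out] v_sat' f_inc].
have same_step : k = k'.
  apply/eqP; rewrite eqn_leq (removed_by_saturation v_sat' e_inc e_in).
  exact: removed_by_saturation v_sat f_inc f_in.
subst k'.
have k_lt := removed_before_end (conj e_in e_out).
rewrite /rising_tide (mu_frozen k_lt e_out) (mu_frozen k_lt f_out).
by rewrite !mu_step e_in f_in (mu_const_Ep e_in f_in).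
Qed.

Definition pin (e : E) : option V :=
  if pinned e (ends e).1 then Some (ends e).1
  else if pinned e (ends e).2 then Some (ends e).2 else None.

Lemma pin_pinned e v : pin e = Some v -> pinned e v.
Proof. by rewrite /pin; case: ifP => [? [<-] //|_]; case: ifP => // ? [<-]. Qed.

Lemma unpinned_rising_tide e :
  0 <= cE e -> pin e = None -> rising_tide ends cV cE e = cE e.
Proof.
move=> cE_ge0; rewrite /pin.
case: ifP => // /negbT/negP not1; case: ifP => // /negbT/negP not2 _.
case: (boolP (e \in Ep 0)) => [/removed_at_exists [k removed] | e_out0].
  have k_lt := removed_before_end removed.
  rewrite /rising_tide (mu_frozen k_lt); last by case: removed.
  case/or3P: (removed_atE removed) => [sat1 | sat2 | /eqP //].
    by case: not1; apply/pinnedP; exists k; rewrite /Defs.incident eqxx.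
  by case: not2; apply/pinnedP; exists k; rewrite /Defs.incident eqxx orbT.
rewrite /rising_tide (mu_frozen (leq0n _) e_out0) /rt_state_at /= ffunE.
by move: e_out0; rewrite inE -leNgt => cE_le0; apply/eqP; rewrite eq_le cE_le0 cE_ge0.
Qed.

Lemma pinned_dep_arcE e u v :
  (forall e f, ends e = ends f \/ ends e = ((ends f).2, (ends f).1) -> e = f) ->
  ends e = (v, u) \/ ends e = (u, v) -> pinned e v <-> dep_arc ends cV cE u v.
Proof.
move=> simple ends_e; split.
  case/pinnedP => k [removed v_sat _]; exists e, k; split=> //.
  by case: ends_e => ->; [left | right].
case=> f [k [removed arc]].
have [f_ends v_sat] : (ends f = (v, u) \/ ends f = (u, v)) /\ vsat (mu k.+1) v.
  by case: arc => [[f2 [f1 sat]] | [f1 [f2 sat]]];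
    rewrite -f1 -f2 -surjective_pairing; split=> //; [left | right].
have -> : e = f.
  by apply: simple; case: ends_e => ->; case: f_ends => ->; by [left | right].
apply/pinnedP; exists k; split=> //.
by rewrite /Defs.incident; case: f_ends => ->; rewrite eqxx ?orbT.
Qed.

End Execution.

Lemma pin_eq_of_dep_arc (R : realFieldType) (V E : finType) (ends : E -> V * V)
    (cV : V -> R) (cE cE' : E -> R) :
  (forall e f, ends e = ends f \/ ends e = ((ends f).2, (ends f).1) -> e = f) ->
  (forall u v, dep_arc ends cV cE u v <-> dep_arc ends cV cE' u v) ->
  pin ends cV cE =1 pin ends cV cE'.
Proof.
move=> simple same_arcs e.
have pinned_eq x y : ends e = (x, y) \/ ends e = (y, x) ->
    pinned ends cV cE e x = pinned ends cV cE' e x.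
  move=> ends_e; apply/idP/idP.
    by move/(pinned_dep_arcE _ _ simple ends_e)/same_arcs/pinned_dep_arcE->.
  by move/(pinned_dep_arcE _ _ simple ends_e)/same_arcs/pinned_dep_arcE->.
rewrite /pin (pinned_eq (ends e).1 (ends e).2) ?(pinned_eq (ends e).2 (ends e).1) //.
  by right; exact: surjective_pairing.
by left; exact: surjective_pairing.
Qed.

Theorem lemma24 (R : realFieldType) (V E : finType) (ends : E -> V * V)
  (cV : V -> R) (cEG cEH : E -> R) (st : E)
  (* (V,E) is a graph: no parallel edges (self-loops allowed) *)
  (Hsimple : forall e f : E,
      ends e = ends f \/ ends e = ((ends f).2, (ends f).1) -> e = f)
  (HcV : forall i, 0 <= cV i)
  (HcEG : forall e, 0 <= cEG e) (HcEH : forall e, 0 <= cEH e)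
  (* G and H differ only in the capacity of the edge st = (s,t) *)
  (Hdiff : forall e, e != st -> cEG e = cEH e)
  (* no two vertices become saturated simultaneously *)
  (HsimG : forall (i j : V) (k : nat), i != j ->
      becomes_sat ends cV cEG i k -> becomes_sat ends cV cEG j k -> False)
  (HsimH : forall (i j : V) (k : nat), i != j ->
      becomes_sat ends cV cEH i k -> becomes_sat ends cV cEH j k -> False)
  (* D_G = D_H *)
  (HD : forall u v : V, dep_arc ends cV cEG u v <-> dep_arc ends cV cEH u v) :
  \sum_(i : V) `| (cV i - load ends (rising_tide ends cV cEG) i)
                 - (cV i - load ends (rising_tide ends cV cEH) i) |
    <= 2 * `| cEG st - cEH st |.
Proof.
set muG := rising_tide ends cV cEG; set muH := rising_tide ends cV cEH.
set tau := pin ends cV cEG.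
have pinH e : pin ends cV cEH e = tau e := esym (pin_eq_of_dep_arc Hsimple HD e).
have tau_pinned e v : tau e = Some v ->
    pinned ends cV cEG e v /\ pinned ends cV cEH e v.
  by move=> tau_e; split; apply: pin_pinned; rewrite ?pinH.
rewrite (eq_bigr (fun i => `|\sum_(e | incident ends e i) (muG e - muH e)|)); last first.
  by move=> i _; rewrite sumrB opprB addrC addrA subrK distrC.
apply: le_trans (sum_norm_excess_le (tau := tau) _ _ _) _.
- by move=> e v /tau_pinned [/pinned_incident].
- move=> e f v /tau_pinned [eG eH] /tau_pinned [fG fH].
  by rewrite /muG /muH (pinned_const eG fG) (pinned_const eH fH).
- move=> e v /tau_pinned [/pinned_vsat/eqP satG /pinned_vsat/eqP satH].
  by rewrite sumrB -/(load ends muG v) -/(load ends muH v) satG satH subrr.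
rewrite mulr_natl; apply: ler_wMn2r.
rewrite (@sum_norm_single _ _ _ _ st) // => e /eqP e_free.
rewrite /muG /muH !unpinned_rising_tide ?pinH //.
by case: eqP => [-> | /eqP /Hdiff ->]; rewrite ?subrr.
Qed.
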